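(* Let $d\ge2$ and $\gamma^\mu\in\mathbb{S}^d$ with zero diagonal and $\gamma^\mu_{ij}>0$ for all $i\ne j$, and set $\gamma^\ast=\min_{i\ne j}\gamma^\mu_{ij}$. For $\mu\in\Delta^d$ let $\widetilde{c}^\mu$ be as defined in the context and let $\widetilde{a}^\mu$ be the same matrix with $\gamma^\mu_{ij}$ replaced by $1$ for all $i\ne j$. Then $\widetilde{c}^\mu-\gamma^\ast\widetilde{a}^\mu$ is positive semidefinite, and $\mathrm{rk}(\widetilde{c}^\mu)=\mathrm{rk}(\widetilde{a}^\mu)$.
   Context: $\Delta^d$ is the unit simplex. For $\mu\in\Delta^d$ and $\gamma\in\mathbb{S}^d$ with zero diagonal, $c\in\mathbb{S}^d$ is given by $c_{ii}=\sum_{j\ne i}\gamma_{ij}\mu^i\mu^j$, $c_{ij}=-\gamma_{ij}\mu^i\mu^j$ ($i\ne j$); $\widetilde{c}^\mu$ denotes this matrix for $\gamma=\gamma^\mu$ with the $d$-th row and column deleted. *)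

From mathcomp Require Import all_boot all_order all_algebra.
Set Implicit Arguments. Unset Strict Implicit. Unset Printing Implicit Defensive.
Import Order.TTheory GRing.Theory Num.Theory.
Local Open Scope ring_scope.

Definition in_simplex (R : realFieldType) (d : nat) (mu : 'I_d -> R) : Prop :=
  (forall i, 0 <= mu i) /\ \sum_(i < d) mu i = 1.

Definition cmat (R : realFieldType) (d : nat) (gamma : 'M[R]_d) (mu : 'I_d -> R)
  : 'M[R]_d :=
  \matrix_(i, j) (if i == j then \sum_(k < d | k != i) gamma i k * mu i * mu k
                  else - (gamma i j * mu i * mu j)).

(* c with the d-th (last) row and column deleted: indices 0..d-2 kept. *)
Definition ctilde (R : realFieldType) (d : nat) (gamma : 'M[R]_d) (mu : 'I_d -> R)
  : 'M[R]_(d.-1) :=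
  \matrix_(i, j) cmat gamma mu (widen_ord (leq_pred d) i) (widen_ord (leq_pred d) j).

Definition ones_offdiag (R : realFieldType) (d : nat) : 'M[R]_d :=
  \matrix_(i, j) (if i == j then 0 else 1).

Definition atilde (R : realFieldType) (d : nat) (mu : 'I_d -> R) : 'M[R]_(d.-1) :=
  ctilde (ones_offdiag R d) mu.

Definition psd (R : realFieldType) (n : nat) (M : 'M[R]_n) : Prop :=
  forall x : 'cV[R]_n, 0 <= (x^T *m M *m x) 0 0.

Definition min_offdiag (R : realFieldType) (d : nat) (gamma : 'M[R]_d) (g : R) : Prop :=
  (exists i j, i != j /\ gamma i j = g) /\ (forall i j, i != j -> g <= gamma i j).

From mathcomp Require Import all_boot all_order all_algebra.
From mathcomp Require Import zify ring.
Import Order.TTheory GRing.Theory Num.Theory.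
Local Open Scope ring_scope.

(* Extending x by a zero last coordinate to y, the quadratic form of the
   truncated matrix is x^T c~ x = 1/2 sum_(i,j) gamma_ij mu_i mu_j (y_j - y_i)^2.
   It is linear in gamma and nonnegative as soon as gamma is nonnegative off the
   diagonal; applied to gamma - gamma* (1 - delta_ij) this gives the semidefinite
   bound.  For gamma > 0 off the diagonal, u c~ = 0 forces the form to vanish
   at u^T, hence the extension of u to be constant on the support of mu, which
   conversely kills u c~.  This condition does not depend on gamma, so c~ and
   a~ have the same left kernel, hence the same rank. *)

Lemma double_sum_symmetrize (R : comPzRingType) (I : finType)
    (a : I -> I -> R) (y : I -> R) :
  (forall i j, a i j = a j i) ->
  (\sum_j \sum_i a i j * (y j - y i) * y j) *+ 2 =
  \sum_j \sum_i a i j * (y j - y i) ^+ 2.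
Proof.
move=> a_sym.
have swap : \sum_j \sum_i a i j * (y j - y i) * y i =
            - \sum_j \sum_i a i j * (y j - y i) * y j.
  rewrite exchange_big /= -sumrN; apply: eq_bigr => j _; rewrite -sumrN.
  by apply: eq_bigr => i _; rewrite a_sym; ring.
rewrite mulr2n -[X in _ + X]opprK -swap -sumrB; apply: eq_bigr => j _.
by rewrite -sumrB; apply: eq_bigr => i _; ring.
Qed.

Lemma eq_mxrank_ker (F : fieldType) m n (A B : 'M[F]_(m, n)) :
  (forall u : 'rV_m, (u *m A == 0) = (u *m B == 0)) -> \rank A = \rank B.
Proof.
move=> eq_ker.
have ker_sub (A' B' : 'M[F]_(m, n)) :
    (forall u : 'rV_m, (u *m A' == 0) = (u *m B' == 0)) ->
    (kermx A' <= kermx B')%MS.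
  by move=> H; apply/row_subP => i; rewrite sub_kermx -H -sub_kermx row_sub.
have : \rank (kermx A) = \rank (kermx B).
  by apply/eqP; rewrite eqn_leq !mxrankS // ker_sub // => u; rewrite eq_ker.
rewrite !mxrank_ker.
by have := rank_leq_row A; have := rank_leq_row B; lia.
Qed.

Section CMatrix.
Variables (R : realFieldType) (d : nat) (mu : 'I_d -> R).
Implicit Types (gamma : 'M[R]_d) (y : 'rV[R]_d).

Local Notation trunc := (widen_ord (leq_pred d)).
(* [u *m E] extends [u] by a zero last coordinate. *)
Local Notation E := (rowsub trunc 1%:M : 'M[R]_(d.-1, d)).

Lemma cmatB g1 g2 : cmat (g1 - g2) mu = cmat g1 mu - cmat g2 mu.
Proof.
apply/matrixP => i j; rewrite !mxE; case: eqP => _.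
  by rewrite -sumrB; apply: eq_bigr => k _; rewrite !mxE !mulrBl.
by rewrite !mulrBl opprB addrC opprK.
Qed.

Lemma cmatZ a gamma : cmat (a *: gamma) mu = a *: cmat gamma mu.
Proof.
apply/matrixP => i j; rewrite !mxE; case: eqP => _.
  by rewrite mulr_sumr; apply: eq_bigr => k _; rewrite !mxE -!mulrA.
by rewrite -!mulrA mulrN.
Qed.

Lemma ctildeE gamma : ctilde gamma mu = E *m cmat gamma mu *m E^T.
Proof.
by rewrite trmx_mxsub trmx1 mulmx_colsub mulmx1 mul_rowsub_mx mul1mx;
  apply/matrixP => i j; rewrite !mxE.
Qed.

Lemma ctildeB g1 g2 : ctilde (g1 - g2) mu = ctilde g1 mu - ctilde g2 mu.
Proof. by rewrite !ctildeE cmatB mulmxBr mulmxBl. Qed.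

Lemma ctildeZ a gamma : ctilde (a *: gamma) mu = a *: ctilde gamma mu.
Proof. by rewrite !ctildeE cmatZ scalemxAl scalemxAr. Qed.

Lemma ctilde_quad gamma (u : 'rV[R]_d.-1) :
  u *m ctilde gamma mu *m u^T = (u *m E) *m cmat gamma mu *m (u *m E)^T.
Proof. by rewrite ctildeE trmx_mul !mulmxA. Qed.

Definition const_on_supp y : bool :=
  [forall i, forall j, (mu i != 0) && (mu j != 0) ==> (y 0 i == y 0 j)].

Variable gamma : 'M[R]_d.
Hypothesis gamma_sym : gamma^T = gamma.

Let gammaC i j : gamma i j = gamma j i.
Proof. by rewrite -[in LHS]gamma_sym mxE. Qed.

Lemma mulmx_cmat y j :
  (y *m cmat gamma mu) 0 j = \sum_i gamma i j * mu i * mu j * (y 0 j - y 0 i).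
Proof.
rewrite mxE (bigD1 j) //= [RHS](bigD1 j) //= subrr mulr0 add0r mxE eqxx.
rewrite mulr_sumr -big_split; apply: eq_bigr => i /negbTE ij.
by rewrite mxE ij gammaC /=; ring.
Qed.

Lemma cmat_quad y :
  (y *m cmat gamma mu *m y^T) 0 0 *+ 2 =
  \sum_j \sum_i gamma i j * mu i * mu j * (y 0 j - y 0 i) ^+ 2.
Proof.
rewrite -double_sum_symmetrize => [|i j]; last by rewrite gammaC; ring.
rewrite mxE; congr (_ *+ 2); apply: eq_bigr => j _.
by rewrite mulmx_cmat mulr_suml mxE.
Qed.

Hypothesis mu_ge0 : forall i, 0 <= mu i.

Lemma cmat_quad_summand_ge0 y i j :
  (forall i j, i != j -> 0 <= gamma i j) ->
  0 <= gamma i j * mu i * mu j * (y 0 j - y 0 i) ^+ 2.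
Proof.
move=> gamma_ge0; case: (eqVneq i j) => [->|ij].
  by rewrite subrr expr2 !mulr0.
by rewrite mulr_ge0 ?sqr_ge0 ?mulr_ge0 ?gamma_ge0.
Qed.

Lemma ctilde_psd :
  (forall i j, i != j -> 0 <= gamma i j) -> psd (ctilde gamma mu).
Proof.
move=> gamma_ge0 x; rewrite -[x in _ *m x]trmxK ctilde_quad.
rewrite -(pmulrn_lge0 _ (isT : (0 < 2)%N)) cmat_quad.
by do 2!apply: sumr_ge0 => ? _; apply: cmat_quad_summand_ge0.
Qed.

Section PositiveWeights.
Hypothesis gamma_gt0 : forall i j, i != j -> 0 < gamma i j.

Lemma cmat_quad_eq0 y : (y *m cmat gamma mu *m y^T) 0 0 = 0 -> const_on_supp y.
Proof.
move=> form0; apply/forallP => i; apply/forallP => j.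
apply/implyP => /andP[mui muj].
have gamma_ge0 k l : k != l -> 0 <= gamma k l by move/gamma_gt0/ltW.
have summand_ge0 k l := cmat_quad_summand_ge0 y k l gamma_ge0.
have sum0 : \sum_j \sum_i gamma i j * mu i * mu j * (y 0 j - y 0 i) ^+ 2 = 0.
  by rewrite -cmat_quad form0 mul0rn.
have row0 :=
  psumr_eq0P (fun k _ => sumr_ge0 _ (fun l _ => summand_ge0 l k)) sum0 (i := j) isT.
move/eqP: (psumr_eq0P (fun k _ => summand_ge0 k j) row0 (i := i) isT).
case: (eqVneq i j) => [-> // | ij].
rewrite mulf_eq0 sqrf_eq0 !mulf_eq0 subr_eq0 (negbTE mui) (negbTE muj).
by rewrite (gt_eqF (gamma_gt0 _ _ ij)) eq_sym.
Qed.

Lemma const_on_supp_cmat y : const_on_supp y -> y *m cmat gamma mu = 0.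
Proof.
move=> /forallP cy; apply/matrixP => a j; rewrite ord1 mulmx_cmat mxE.
apply: big1 => i _; move/forallP: (cy i) => /(_ j).
case: (eqVneq (mu i) 0) => [->|_]; first by rewrite !(mulr0, mul0r).
case: (eqVneq (mu j) 0) => [->|_]; first by rewrite !(mulr0, mul0r).
by move=> /= /eqP ->; rewrite subrr mulr0.
Qed.

Lemma ctilde_kerP (u : 'rV[R]_d.-1) :
  (u *m ctilde gamma mu == 0) = const_on_supp (u *m E).
Proof.
apply/eqP/idP => [ker | cy].
  by apply: cmat_quad_eq0; rewrite -ctilde_quad ker mul0mx mxE.
by rewrite ctildeE !mulmxA const_on_supp_cmat ?mul0mx.
Qed.

End PositiveWeights.
End CMatrix.

Theorem mainTheorem17 (R : realFieldType) (d : nat) (hd : (2 <= d)%N)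
  (gamma : 'M[R]_d) (gsym : gamma^T = gamma)
  (gdiag : forall i, gamma i i = 0)
  (gpos : forall i j, i != j -> 0 < gamma i j)
  (gstar : R) (hgstar : min_offdiag gamma gstar)
  (mu : 'I_d -> R) (hmu : in_simplex mu) :
  psd (ctilde gamma mu - gstar *: atilde mu) /\
  \rank (ctilde gamma mu) = \rank (atilde mu).
Proof.
case: hgstar => _ gstar_le; case: hmu => mu_ge0 _.
set J := ones_offdiag R d.
have J_sym : J^T = J by apply/matrixP => i j; rewrite !mxE eq_sym.
have J_gt0 i j : i != j -> 0 < J i j by rewrite mxE => /negbTE ->.
split.
- rewrite /atilde -ctildeZ -ctildeB; apply: ctilde_psd => // [|i j ij].
    by rewrite linearB linearZ /= gsym J_sym.
  by rewrite !mxE (negbTE ij) mulr1 subr_ge0 gstar_le.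
- by apply: eq_mxrank_ker => u; rewrite !ctilde_kerP.
Qed.
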